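(* Let $(X,d)$ be a separable metric space, $T\colon X\to X$ a Borel measurable map and $\mu$ a $T$-invariant Borel probability measure on $X$. Let $(s_n)_{n\ge1}$ be a scale sequence which is either monotone or steady. Then the proximality gauge $\psi(x,y)=\liminf_{n\to\infty} s_n\, d(T^nx,T^ny)$ satisfies $\psi(Tx,Ty)=\psi(x,y)$ for $\mu\times\mu$-almost every $(x,y)\in X^2$.
   Context: A scale sequence is a sequence $(s_n)_{n\ge1}$ of positive reals with $s_n\to\infty$. It is monotone if $s_{n+1}\ge s_n$ for all sufficiently large $n$, and steady if $\lim_{n\to\infty}s_{n+1}/s_n=1$. *)

From HB Require Import structures.
From mathcomp Require Import all_boot all_order all_algebra.
From mathcomp Require Import all_classical all_reals all_analysis.
Set Implicit Arguments. Unset Strict Implicit. Unset Printing Implicit Defensive.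
Import Order.TTheory GRing.Theory Num.Theory numFieldNormedType.Exports.
Local Open Scope classical_set_scope.
Local Open Scope ring_scope.

(* Pointed metric spaces (join of the library's metricType with pointedType);
   the point is harmless: a space carrying a probability measure is nonempty,
   and MathComp-Analysis' measurable types are required to be pointed. *)
#[short(type="pmetricType")]
HB.structure Definition PointedMetric (K : numDomainType) :=
  { M of Pointed M & Metric K M }.

Definition borel (X : ptopologicalType) := g_sigma_algebraType (@open X).

Definition separable (X : topologicalType) : Prop :=
  exists D : set X, countable D /\ dense D.

Definition scale_sequence (R : realType) (s : nat -> R) : Prop :=
  (forall n, (1 <= n)%N -> 0 < s n) /\ s @ \oo --> +oo.

Definition monotone_seq (R : realType) (s : nat -> R) : Prop :=
  exists N, forall n, (N <= n)%N -> s n <= s n.+1.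

Definition steady_seq (R : realType) (s : nat -> R) : Prop :=
  (fun n => s n.+1 / s n) @ \oo --> (1:R)%R.

Definition prox_gauge (R : realType) (X : metricType R) (T : X -> X)
  (s : nat -> R) (x y : X) : \bar R :=
  limn_einf (fun n => (s n * mdist (iter n T x) (iter n T y))%:E).

From HB Require Import structures.
From mathcomp Require Import all_boot all_order all_algebra.
From mathcomp Require Import all_classical all_reals all_analysis.
From mathcomp Require Import measurable_realfun.
From mathcomp Require Import zify.
From mathcomp.algebra_tactics Require Import lra.
Import Order.TTheory GRing.Theory Num.Theory numFieldNormedType.Exports.
Local Open Scope classical_set_scope.
Local Open Scope ring_scope.

(* The gauge psi(Tx, Ty) is the liminf of s_n d(T^(n+1) x, T^(n+1) y), so it
   differs from psi(x, y) only through the ratios s_n / s_(n+1).  If s is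
   steady these ratios tend to 1, hence each of psi(Tx, Ty) and psi(x, y) is
   at most k times the other for every k > 1, and they agree everywhere.  If
   s is monotone the ratios are eventually at most 1, so psi(Tx, Ty) <=
   psi(x, y) everywhere.  Separability makes d Borel on X x X, hence psi is
   measurable, and T x T preserves mu x mu.  A measurable function that can
   only decrease along a measure-preserving map of a finite measure is
   invariant almost everywhere: each sublevel set {psi < q}, q rational, is
   contained in its preimage, which has the same finite measure. *)

Section limn_einf.
Context {R : realType}.
Local Open Scope ereal_scope.
Implicit Types (u v : (\bar R)^nat).

Lemma limn_einfE u : limn_einf u = ereal_sup (range (einfs u)).
Proof. by rewrite limn_einf_lim; apply/cvg_lim => //; exact: cvg_einfs_sup. Qed.

Lemma einfs_le_limn_einf u n : einfs u n <= limn_einf u.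
Proof. by rewrite limn_einfE; apply: ereal_sup_ubound; exists n. Qed.

Lemma limn_einf_le u z : (forall n, einfs u n <= z) -> limn_einf u <= z.
Proof. by move=> uz; rewrite limn_einfE; apply: ge_ereal_sup => _ [n _ <-]. Qed.

Lemma limn_einf_le_pscale u v (k : R) i j : (0 < k)%R ->
  (\forall n \near \oo, u (n + j)%N <= k%:E * v (n + i)%N) ->
  limn_einf u <= k%:E * limn_einf v.
Proof.
move=> k0 [N _ uv]; apply: limn_einf_le => n.
apply: le_trans (nondecreasing_einfs u (leq_addr (N + j) n)) _.
apply: (@le_trans _ _ (k%:E * einfs v (n + (N + i))%N)); last first.
  by rewrite lee_pmul2l//; exact: einfs_le_limn_einf.
rewrite -lee_pdivrMl//; apply: le_ereal_inf_tmp => _ [m /= nm <-].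
rewrite lee_pdivrMl// (_ : m = m - i + i)%N; last by lia.
apply: le_trans (uv (m - i)%N _); last by rewrite /=; lia.
by apply: ereal_inf_lbound; exists (m - i + j)%N => //=; lia.
Qed.

End limn_einf.

Lemma lee_gt1_scale {R : realType} (x y : \bar R) :
  (forall k : R, 1 < k -> (x <= k%:E * y)%E) -> (x <= y)%E.
Proof.
have k2 : 1 < 2 :> R by rewrite ltr1n.
case: y => [r| |] xy; last 2 first.
- by rewrite leey.
- by have := xy _ k2; rewrite mulrNy gtr0_sg// mul1e.
case: x xy => [a| |] xy; last 2 first.
- by have := xy _ k2; rewrite -EFinM.
- by rewrite leNye.
rewrite lee_fin; have [r0|r0] := ltP r 0.
  by have := xy _ k2; rewrite -EFinM lee_fin => ?; nra.
apply/ler_addgt0Pr => e e0.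
have r1 : 0 < r + 1 by lra.
have /xy : 1 < 1 + e / (r + 1) by rewrite ltrDl divr_gt0.
rewrite -EFinM lee_fin => /le_trans; apply.
rewrite mulrDl mul1r lerD2l mulrAC ler_pdivrMr//; nra.
Qed.

Lemma steady_seq_ratio_near {R : realType} (s : nat -> R) (k : R) :
  (forall n, (1 <= n)%N -> 0 < s n) -> steady_seq s -> 1 < k ->
  \forall n \near \oo, s n <= k * s n.+1 /\ s n.+1 <= k * s n.
Proof.
move=> s_gt0 s_steady k1.
have kVk : k * k^-1 = 1 by rewrite divff// gt_eqF//; lra.
have kV0 : 0 < k^-1 by rewrite invr_gt0; lra.
have e0 : 0 < 1 - k^-1 by rewrite subr_gt0 invf_lt1//; lra.
have [N _ near1] := cvgr_dist_lt _ _ s_steady _ e0.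
exists (maxn N 1) => // n /= Nn.
have sn0 : 0 < s n by apply: s_gt0; lia.
have /near1 /= : (N <= n)%N by lia.
rewrite ltr_distl => /andP[lo hi].
have rsn : s n.+1 / s n * s n = s n.+1 by rewrite mulfVK ?gt_eqF.
set r := s n.+1 / s n in lo hi rsn; rewrite -rsn.
have kr : 1 <= k * r by rewrite -kVk ler_wpM2l ?ltW//; lra.
have rk : r <= k.
  have : k^-1 * (k - 1) ^+ 2 = k - 2 + k^-1.
    by rewrite sqrrB1 mulrDr mulrBr mulrA mulVf ?gt_eqF ?expr2; lra.
  have := mulr_ge0 (ltW kV0) (sqr_ge0 (k - 1)); lra.
by split; nra.
Qed.

Section prox_gauge.
Context {R : realType} (X : metricType R) (T : X -> X) (s : nat -> R).
Local Notation psi := (prox_gauge T s).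

Let orbit_dist x y n := mdist (iter n T x) (iter n T y).

Let prox_gauge_comp x y :
  psi (T x) (T y) = limn_einf (fun n => (s n * orbit_dist x y n.+1)%:E).
Proof. by congr limn_einf; apply/funext => n; rewrite /orbit_dist !iterSr. Qed.

Lemma prox_gauge_comp_le_pscale (k : R) x y : 0 < k ->
  (\forall n \near \oo, s n <= k * s n.+1) ->
  (psi (T x) (T y) <= k%:E * psi x y)%E.
Proof.
move=> k0 sk; rewrite prox_gauge_comp.
apply: (@limn_einf_le_pscale _ _ _ _ 1 0) => //; apply: filterS sk => n snk.
rewrite /orbit_dist addn0 addn1 -EFinM lee_fin mulrA ler_wpM2r//.
exact: mdist_ge0.
Qed.

Lemma prox_gauge_le_pscale_comp (k : R) x y : 0 < k ->
  (\forall n \near \oo, s n.+1 <= k * s n) ->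
  (psi x y <= k%:E * psi (T x) (T y))%E.
Proof.
move=> k0 sk; rewrite prox_gauge_comp.
apply: (@limn_einf_le_pscale _ _ _ _ 0 1) => //; apply: filterS sk => n snk.
rewrite /orbit_dist addn0 addn1 -EFinM lee_fin mulrA ler_wpM2r//.
exact: mdist_ge0.
Qed.

Lemma prox_gauge_comp_le_monotone x y : monotone_seq s ->
  (psi (T x) (T y) <= psi x y)%E.
Proof.
move=> [N sN]; rewrite -[psi x y]mul1e.
by apply: prox_gauge_comp_le_pscale => //; exists N => // n /sN; rewrite mul1r.
Qed.

Lemma prox_gauge_comp_steady x y : (forall n, (1 <= n)%N -> 0 < s n) ->
  steady_seq s -> psi (T x) (T y) = psi x y.
Proof.
move=> s_gt0 s_steady; apply/eqP; rewrite eq_le.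
apply/andP; split; apply: lee_gt1_scale => k k1;
  have k0 : 0 < k by lra.
all: have sk := steady_seq_ratio_near s k s_gt0 s_steady k1.
- by apply: prox_gauge_comp_le_pscale => //; apply: filterS sk => n [].
- by apply: prox_gauge_le_pscale_comp => //; apply: filterS sk => n [].
Qed.

End prox_gauge.

Lemma measurableT_preimage {d d'} {U : measurableType d} {V : measurableType d'}
    {f : U -> V} {B : set V} :
  measurable_fun setT f -> measurable B -> measurable (f @^-1` B).
Proof. by move=> mf mB; rewrite -[_ @^-1` _]setTI; exact: mf. Qed.

Definition measure_preserving {d} {T : measurableType d} {R : realType}
    (P : set T -> \bar R) (S : T -> T) :=
  measurable_fun [set: T] S /\ forall A, measurable A -> P (S @^-1` A) = P A.

Lemma measure_preserving_prod d1 d2 (T1 : measurableType d1)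
    (T2 : measurableType d2) (R : realType)
    (m1 : {sigma_finite_measure set T1 -> \bar R})
    (m2 : {sigma_finite_measure set T2 -> \bar R}) (S1 : T1 -> T1) (S2 : T2 -> T2) :
  measure_preserving m1 S1 -> measure_preserving m2 S2 ->
  measure_preserving (m1 \x m2)%E (fun z => (S1 z.1, S2 z.2)).
Proof.
move=> [mS1 m1S1] [mS2 m2S2].
set S := fun z : T1 * T2 => (S1 z.1, S2 z.2).
have mS : measurable_fun setT S.
  by apply: measurable_fun_pair; exact: measurableT_comp.
have rect B C : measurable B -> measurable C ->
    pushforward (m1 \x m2)%E S (B `*` C) = (m1 B * m2 C)%E.
  move=> mB mC; rewrite /pushforward (_ : S @^-1` _ = S1 @^-1` B `*` S2 @^-1` C) //.
  rewrite product_measure1E; try exact: measurableT_preimage.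
  by congr (_ * _)%E; [exact: m1S1|exact: m2S2].
split=> // A mA.
by rewrite [RHS](product_measure_unique rect).
Qed.

Lemma ereal_rat_between {R : realType} (a b : \bar R) : (a < b)%E ->
  exists q : rat, (a < (ratr q)%:E < b)%E.
Proof.
move=> ab.
have [x [y [xy ax yb]]] :
    exists x y : R, [/\ x < y, (a <= x%:E)%E & (y%:E <= b)%E].
  move: a b ab => [a| |] [b| |] //= ab.
  - by exists a, b; rewrite !lexx -lte_fin.
  - by exists a, (a + 1); rewrite lexx leey ltrDl.
  - by exists (b - 1), b; rewrite lexx leNye ltrBlDr ltrDl.
  - by exists 0, 1; rewrite leNye leey.
have [q] := rat_in_itvoo xy; rewrite in_itv /= => /andP[xq qy].
by exists q; rewrite (le_lt_trans ax) ?lte_fin ?(lt_le_trans _ yb) ?lte_fin.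
Qed.

Section measure_preserving.
Context d (O : measurableType d) (R : realType).
Variables (P : {finite_measure set O -> \bar R}) (S : O -> O).
Hypothesis PS : measure_preserving P S.

Lemma negligible_preimageD A : measurable A -> A `<=` S @^-1` A ->
  P.-negligible (S @^-1` A `\` A).
Proof.
move=> mA AS; have mSA := measurableT_preimage PS.1 mA.
exists (S @^-1` A `\` A); split => //; first exact: measurableD.
rewrite measureD ?ltey_eq ?fin_num_measure // setIidr //.
transitivity (P A - P A)%E; first by congr (_ - _)%E; exact: PS.2.
by rewrite subee ?fin_num_measure.
Qed.

Lemma ae_comp_eq_of_le (f : O -> \bar R) : measurable_fun setT f ->
  (forall z, (f (S z) <= f z)%E) -> {ae P, forall z, f (S z) = f z}.
Proof.
move=> mf fS; pose A (q : rat) := [set z | (f z < (ratr q)%:E)%E].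
have mA q : measurable (A q).
  by rewrite -[A q]setTI; exact: emeasurable_fun_infty_o.
have AS q : A q `<=` S @^-1` A q by move=> z /(le_lt_trans (fS z)).
pose B n := if unpickle n is Some q then S @^-1` A q `\` A q else set0.
have : P.-negligible (\bigcup_n B n).
  apply: negligible_bigcup => n; rewrite /B; case: unpickle => [q|].
  - exact: negligible_preimageD.
  - exact: negligible_set0.
apply: negligibleS => z /= /eqP fSz.
have /ereal_rat_between[q /andP[Sq qz]] : (f (S z) < f z)%E.
  by rewrite lt_neqAle fSz fS.
exists (pickle q); first by [].
by rewrite /B pickleK; split; [exact: Sq | rewrite /A /= ltNge (ltW qz)].
Qed.

End measure_preserving.

Section borel_mdist.
Context {R : realType} (X : pmetricType R).

Lemma open_mdist_lt (q : X) (r : R) : open [set y | mdist q y < r].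
Proof.
rewrite openE => y /= qy; apply/nbhs_ballP.
exists (r - mdist q y); first by rewrite /= subr_gt0.
move=> z; rewrite ballEmdist /= => yz.
by apply: le_lt_trans (metric_triangle q y z) _; rewrite -ltrBrDl.
Qed.

Lemma measurable_mdist (q : X) :
  measurable_fun setT (fun x : borel X => mdist q x).
Proof.
apply: (measurability _ (RGenInftyO.measurableE R)) => //.
move=> _ [_ [r ->] <-]; rewrite setTI; apply: sub_sigma_algebra.
rewrite (_ : _ @^-1` _ = [set y | mdist q y < r]); first exact: open_mdist_lt.
by apply/seteqP; split => y /=; rewrite in_itv.
Qed.

Lemma mdist_lt_bigcup (D : set X) (r : R) : dense D ->
  [set z : X * X | mdist z.1 z.2 < r] =
  \bigcup_(q in D) [set z | mdist q z.1 + mdist q z.2 < r].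
Proof.
move=> dD; apply/seteqP; split => -[x y] /=; last first.
  move=> [q _ /= qxy]; apply: le_lt_trans qxy.
  by rewrite (metric_sym q x); exact: metric_triangle.
move=> xy; pose e := (r - mdist x y) / 2.
have [q [xq Dq]] : [set q | mdist x q < e] `&` D !=set0.
  apply: dD (open_mdist_lt x e).
  by exists x; rewrite /= mdistxx divr_gt0// subr_gt0.
exists q => //=; move: xq; rewrite /= /e (metric_sym q x).
have := metric_triangle q x y; rewrite (metric_sym q x); lra.
Qed.

Lemma measurable_mdist_pair : separable X ->
  measurable_fun setT (fun z : borel X * borel X => mdist z.1 z.2).
Proof.
move=> [D [cD dD]].
apply: (measurability _ (RGenInftyO.measurableE R)) => //.
move=> _ [_ [r ->] <-]; rewrite setTI.
rewrite (_ : _ @^-1` _ = [set z : X * X | mdist z.1 z.2 < r]); last first.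
  by apply/seteqP; split => z /=; rewrite in_itv.
rewrite (mdist_lt_bigcup _ r dD) bigcup_set_type.
apply: countable_bigcupT_measurable => [|q].
  by rewrite (eq_countable (card_setT _)).
pose g (z : borel X * borel X) := mdist (val q) z.1 + mdist (val q) z.2.
have mg : measurable_fun setT g.
  apply: measurable_funD.
  - exact: measurableT_comp (measurable_mdist _) measurable_fst.
  - exact: measurableT_comp (measurable_mdist _) measurable_snd.
rewrite (_ : [set z | _] = g @^-1` `]-oo, r[); last first.
  by apply/seteqP; split => z /=; rewrite in_itv.
by rewrite -[X in measurable X]setTI; exact: mg.
Qed.

End borel_mdist.

Lemma measurable_prox_gauge {R : realType} (X : pmetricType R) (T : X -> X)
    (s : nat -> R) : separable X ->
  measurable_fun [set: borel X] (T : borel X -> borel X) ->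
  measurable_fun setT (fun z : borel X * borel X => prox_gauge T s z.1 z.2).
Proof.
move=> sepX mT.
have mTn n : measurable_fun setT (iter n (T : borel X -> borel X)).
  by elim: n => [|n IHn]; [exact: measurable_id | exact: measurableT_comp].
apply: measurableT_comp => //; apply: measurable_fun_limn_esup => n.
apply: measurableT_comp => //; apply/measurable_EFinP.
apply: measurable_funM => //.
rewrite (_ : (fun z => _) = (fun z : borel X * borel X => mdist z.1 z.2) \o
  (fun z => (iter n T z.1, iter n T z.2) : borel X * borel X)) //.
apply: measurableT_comp; first exact: measurable_mdist_pair.
apply: measurable_fun_pair.
- exact: measurableT_comp (mTn n) measurable_fst.
- exact: measurableT_comp (mTn n) measurable_snd.
Qed.

Theorem proposition3p8 (R : realType) (X : pmetricType R)
  (hX : separable X)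
  (T : X -> X) (hT : measurable_fun [set: borel X] (T : borel X -> borel X))
  (mu : probability (borel X) R)
  (hinv : forall A : set (borel X), measurable A -> mu (T @^-1` A) = mu A)
  (s : nat -> R) (hs : scale_sequence s)
  (hms : monotone_seq s \/ steady_seq s) :
  {ae (mu \x mu)%E, forall z : (borel X * borel X)%type,
     prox_gauge T s (T z.1) (T z.2) = prox_gauge T s z.1 z.2}.
Proof.
have [s_gt0 _] := hs.
case: hms => [s_mono|s_steady]; last first.
  by apply: nearW => z; exact: prox_gauge_comp_steady.
have TT_preserving : measure_preserving (mu \x mu)%E
    (fun z : borel X * borel X => (T z.1, T z.2) : borel X * borel X).
  by apply: measure_preserving_prod; split.
pose P := product_subprobability (mu : subprobability _ R, mu : subprobability _ R).
apply: (@ae_comp_eq_of_le _ _ _ P _ TT_preserving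
  (fun z : borel X * borel X => prox_gauge T s z.1 z.2)).
- exact: measurable_prox_gauge.
- by move=> z; exact: prox_gauge_comp_le_monotone.
Qed.
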